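(* Let $d$ be a positive integer with $d \notin \{1, 3\}$, let $\mathbb{F}$ be a field, let $D_1 = \mathbb{F}((T))$, and let $D_2$ be a subring of $\overline{\mathbb{F}}^{\mathrm{alg}}((T))$. Consider the game of degree $d$ in which Nora and Wanda choose the polynomial coefficients from $D_1$. If Nora makes the last move, she can ensure that the final polynomial has no root in $D_2$.
   Context: $\mathbb{F}((T))$ denotes the field of formal Laurent series in the variable $T$ with coefficients in $\mathbb{F}$, and $\overline{\mathbb{F}}^{\mathrm{alg}}$ an algebraic closure of $\mathbb{F}$. The game: Nora and Wanda alternately choose coefficients of $f(x) = a_d x^d + \cdots + a_0$; on each move the current player picks a not-yet-chosen coefficient and assigns it a value in $D_1$, subject to $a_d \neq 0$, $a_0 \neq 0$. *)

From HB Require Import structures.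
From mathcomp Require Import all_boot all_order all_algebra.
From Stdlib Require Import ClassicalEpsilon.

Set Implicit Arguments.
Unset Strict Implicit.
Unset Printing Implicit Defensive.

Import Order.TTheory GRing.Theory Num.Theory.
Local Open Scope ring_scope.

(* Formal Laurent series R((T)), represented as coefficient functions   *)
(* f : int -> R whose support is bounded below (f n = coefficient of   *)
(* T^n).  Equality of Laurent series is equality of these functions.   *)
Section Laurent.
Variable R : nzRingType.

Definition laurentP (f : int -> R) : Prop :=
  exists N : int, forall n : int, n < N -> f n = 0.

(* some lower bound for the support (any valid one; chosen classically) *)
Definition lbound (f : int -> R) : int :=
  epsilon (inhabits (0 : int)) (fun N : int => forall n : int, n < N -> f n = 0).

Definition lzero : int -> R := fun _ => 0.
Definition lone : int -> R := fun n => if n == 0 then 1 else 0.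
Definition ladd (f g : int -> R) : int -> R := fun n => f n + g n.
Definition lopp (f : int -> R) : int -> R := fun n => - f n.
(* Cauchy product: (fg)_n = sum_{a <= k <= n - b} f_k g_{n-k} *)
Definition lmul (f g : int -> R) : int -> R := fun n =>
  let a := lbound f in let b := lbound g in
  \sum_(j < (absz (n - a - b)%R).+1) f (a + j%:Z)%R * g (n - a - j%:Z)%R.
Definition lpow (f : int -> R) (k : nat) : int -> R := iter k (lmul f) lone.

Definition is_lsubring (S : (int -> R) -> Prop) : Prop :=
  [/\ forall f, S f -> laurentP f,
      S lone,
      forall f g, S f -> S g -> S (ladd f g),
      forall f, S f -> S (lopp f) &
      forall f g, S f -> S g -> S (lmul f g)].

Definition leval (d : nat) (a : 'I_d.+1 -> int -> R) (x : int -> R) : int -> R :=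
  fun n => \sum_(i < d.+1) lmul (a i) (lpow x i) n.

End Laurent.

(* The coefficient game of degree d.  A position records, for each     *)
(* index i (coefficient of x^i), either None (not yet chosen) or the   *)
(* chosen value.  With n coefficients still to be chosen, the mover is *)
(* Nora iff n is odd: this is exactly "Nora makes the last move".      *)
Section Game.
Variables (A : Type) (d : nat) (valid : 'I_d.+1 -> A -> Prop)
          (goal : ('I_d.+1 -> A) -> Prop) (dflt : A).

Definition upd (s : 'I_d.+1 -> option A) (i : 'I_d.+1) (c : A) : 'I_d.+1 -> option A :=
  fun j => if j == i then Some c else s j.

Fixpoint nora_wins_from (n : nat) (s : 'I_d.+1 -> option A) : Prop :=
  match n with
  | 0 => goal (fun i => odflt dflt (s i))
  | n'.+1 =>
      if odd n'.+1 then
        exists i c, [/\ s i = None, valid i c & nora_wins_from n' (upd s i c)]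
      else
        forall i c, s i = None -> valid i c -> nora_wins_from n' (upd s i c)
  end.

Definition nora_wins_last : Prop := nora_wins_from d.+1 (fun _ => None).
End Game.

Definition coef_valid (F : nzRingType) (d : nat) (i : 'I_d.+1) (c : int -> F) : Prop :=
  laurentP c /\ ((nat_of_ord i == 0)%N || (nat_of_ord i == d) -> exists n, c n != 0).

From HB Require Import structures.
From mathcomp Require Import all_boot all_order all_algebra.
From Stdlib Require Import ClassicalEpsilon.
From mathcomp Require Import zify ring.
Import Order.TTheory GRing.Theory Num.Theory.
Local Open Scope ring_scope.
Set Implicit Arguments.
Unset Strict Implicit.

(* If the coefficients a_i of f have T-adic valuations V_i and x has valuation
   s, the term a_i x^i has valuation V_i + i s; when for every integer s the
   minimum of these is attained by a single i, f(x) is a nonzero Laurent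
   series, so f has no root in any ring of Laurent series.  Before her last
   move Nora spends her turns setting the coefficients of x and x^(d-1) to 0,
   and for d = 4 also the middle one if Wanda made a_1 or a_3 nonzero; for
   d <> 3 she has enough turns.  Her last move then fills some a_j with
   j <> 1, d-1, and she takes a_j = T^w with w very negative and with suitable
   residues modulo j and d - j, so that the lower Newton polygon of f has one
   or two edges, none of integral slope (or a_j = 0 in the exceptional case
   d = 4, j = 2, V_4 - V_0 odd). *)

Local Notation z i := (nat_of_ord i)%:Z.

(* [v i] is the valuation of the i-th coefficient, [None] for a zero one. *)
Definition dominant (d : nat) (v : 'I_d.+1 -> option int) : Prop :=
  forall s : int, exists i0 A0, v i0 = Some A0 /\ forall i A, i != i0 -> v i = Some A ->
    A0 + z i0 * s < A + z i * s.

Section LaurentValuation.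
Variable R : idomainType.
Implicit Types (f g x : int -> R) (A B : int).

Definition has_val f (o : option int) : Prop :=
  if o is Some A then f A != 0 /\ forall k, k < A -> f k = 0
  else forall k, f k = 0.

Lemma exists_val f : laurentP f -> exists o, has_val f o.
Proof.
move=> [N fN]; have [[n fn]|f0] := excluded_middle_informative (exists n, f n != 0); last first.
  by exists None => k; case: (f k =P 0) => // /eqP fk; case: f0; exists k.
have ex_m : exists m : nat, f (N + m%:Z) != 0.
  have [/fN fn0|leNn] := ltP n N; first by rewrite fn0 eqxx in fn.
  by exists `|n - N|%N; have -> : N + `|n - N|%:Z = n by lia.
have [m fm m_min] := ex_minnP ex_m.
exists (Some (N + m%:Z)); split => // k ltk; have [/fN //|leNk] := ltP k N.
have : ~~ (f (N + `|k - N|%:Z) != 0) by apply: contraTN ltk => /m_min; lia.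
rewrite negbK (_ : N + `|k - N|%:Z = k) => [/eqP //|]; lia.
Qed.

Lemma has_val_eq0 f o : (forall k, f k = 0) -> has_val f o -> o = None.
Proof. by move=> f0; case: o => // A []; rewrite f0 eqxx. Qed.

Lemma has_val_lone : has_val (lone R) (Some 0).
Proof. by split=> [|k k_lt0]; rewrite /lone ?eqxx ?oner_neq0 // lt_eqF. Qed.

Lemma lbound_spec f : laurentP f -> forall k, k < lbound f -> f k = 0.
Proof. exact: epsilon_spec. Qed.

Lemma lbound_le_val f A : has_val f (Some A) -> lbound f <= A.
Proof.
move=> [fA f_lt]; rewrite leNgt; apply: contra fA => /(lbound_spec (ex_intro _ A f_lt)) ->.
by rewrite eqxx.
Qed.

Lemma lmul_eq0_lt f g A B : (forall k, k < A -> f k = 0) -> (forall k, k < B -> g k = 0) ->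
  forall n, n < A + B -> lmul f g n = 0.
Proof.
move=> f_lt g_lt n n_lt; rewrite /lmul big1 // => j _.
have [/f_lt ->|leAj] := ltP (lbound f + j%:Z) A; first by rewrite mul0r.
by rewrite g_lt ?mulr0 //; lia.
Qed.

Lemma lmul_eq0l f g n : (forall k, f k = 0) -> lmul f g n = 0.
Proof. by move=> f0; rewrite /lmul big1 // => j _; rewrite f0 mul0r. Qed.

Lemma lmul_eq0r f g n : (forall k, g k = 0) -> lmul f g n = 0.
Proof. by move=> g0; rewrite /lmul big1 // => j _; rewrite g0 mulr0. Qed.

Lemma lmul_val f g A B : has_val f (Some A) -> has_val g (Some B) ->
  lmul f g (A + B) = f A * g B.
Proof.
move=> fA gB; have la := lbound_le_val fA; have lb := lbound_le_val gB.
case: fA gB => _ f_lt [_ g_lt]; rewrite /lmul.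
set a := lbound f; set b := lbound g.
have jA : (absz (A - a)%R < (absz (A + B - a - b)%R).+1)%N by lia.
rewrite (bigD1 (Ordinal jA)) //= big1 ?addr0 => [|j j_neq].
  by congr (f _ * g _); lia.
have [/f_lt ->|leAj] := ltP (a + j%:Z) A; first by rewrite mul0r.
rewrite g_lt ?mulr0 //; suff : (j : nat) != absz (A - a)%R by lia.
by apply: contra j_neq => /eqP eq_j; apply/eqP/val_inj.
Qed.

Lemma has_val_lmul f g A B : has_val f (Some A) -> has_val g (Some B) ->
  has_val (lmul f g) (Some (A + B)).
Proof.
move=> fA gB; split; first by rewrite lmul_val // mulf_neq0 //; [case: fA | case: gB].
by apply: lmul_eq0_lt; [case: fA | case: gB].
Qed.

Lemma has_val_lpow x s (i : nat) : has_val x (Some s) -> has_val (lpow x i) (Some (i%:Z * s)).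
Proof.
move=> xs; elim: i => [|i IHi]; first by rewrite mul0r; apply: has_val_lone.
rewrite (_ : i.+1%:Z * s = s + i%:Z * s); first exact: has_val_lmul.
by rewrite -addn1 PoszD mulrDl mul1r addrC.
Qed.

Lemma lpow_val x s (i : nat) : has_val x (Some s) -> lpow x i (i%:Z * s) = x s ^+ i.
Proof.
move=> xs; elim: i => [|i IHi]; first by rewrite mul0r /lpow /= /lone eqxx.
rewrite (_ : i.+1%:Z * s = s + i%:Z * s) ?exprS -?IHi; first exact: lmul_val (has_val_lpow i xs).
by rewrite -addn1 PoszD mulrDl mul1r addrC.
Qed.

Lemma leval_nonzero d (b : 'I_d.+1 -> int -> R) (v : 'I_d.+1 -> option int) x :
  (forall i, has_val (b i) (v i)) -> v ord0 != None -> dominant v -> laurentP x ->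
  ~ (forall n, leval b x n = 0).
Proof.
move=> bv; case v0: (v ord0) => [A0|] // _ dom /exists_val[[s|] xs] root; last first.
  have b0 := bv ord0; rewrite v0 in b0.
  have := root A0; rewrite /leval big_ord_recl big1 => [|i _]; last first.
    by apply: lmul_eq0r => k; apply: lmul_eq0l.
  rewrite addr0 -[A0]addr0 (lmul_val b0 has_val_lone) /lone eqxx mulr1.
  by apply/eqP; case: b0.
have [i0 [A [vi0 lt_i0]]] := dom s; have bi0 := bv i0; rewrite vi0 in bi0.
have := root (A + z i0 * s); rewrite /leval (bigD1 i0) //= big1 => [|i ne_i].
  rewrite addr0 (lmul_val bi0 (has_val_lpow i0 xs)) lpow_val //.
  by apply/eqP; rewrite mulf_neq0 ?expf_neq0 //; [case: bi0|case: xs].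
have := bv i; case vi: (v i) => [B|]; last exact: lmul_eq0l.
move=> bi; apply: lmul_eq0_lt (lt_i0 i B ne_i vi); first by case: bi.
by case: (has_val_lpow i xs).
Qed.

End LaurentValuation.

Lemma lt_above_chord (l i r Vl Vi Vr s m : int) : l < i < r ->
  (r - i) * Vl + (i - l) * Vr < (r - l) * Vi ->
  m <= Vl + l * s -> m <= Vr + r * s -> m < Vi + i * s.
Proof.
move=> /andP[li ir] above mVl mVr.
have lin : (r - i) * (Vl + l * s) + (i - l) * (Vr + r * s)
           = (r - i) * Vl + (i - l) * Vr + (r - l) * (i * s) by ring.
have : (r - l) * m < (r - l) * (Vi + i * s) by nia.
by rewrite ltr_pM2l // subr_gt0 (lt_trans li).
Qed.

Section NewtonPolygon.
Variables (d : nat) (v : 'I_d.+1 -> option int).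

Lemma dominant_of_hull (P : pred 'I_d.+1) :
  (forall s, exists i0 A0, [/\ P i0, v i0 = Some A0 &
     forall k B, P k -> k != i0 -> v k = Some B -> A0 + z i0 * s < B + z k * s]) ->
  (forall i A s m, ~~ P i -> v i = Some A ->
     (forall k B, P k -> v k = Some B -> m <= B + z k * s) -> m < A + z i * s) ->
  dominant v.
Proof.
move=> vertex above s; have [i0 [A0 [Pi0 vi0 lt_i0]]] := vertex s.
exists i0, A0; split=> // i A ne_i vi.
have [Pi|nPi] := boolP (P i); first exact: lt_i0.
apply: above nPi vi _ => k B Pk vk; have [eq_k|ne_k] := eqVneq k i0.
  by move: vk; rewrite eq_k vi0 => -[->].
exact/ltW/lt_i0.
Qed.

Lemma dominant2 p q Vp Vq : v p = Some Vp -> v q = Some Vq ->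
  ~~ (z q - z p %| Vp - Vq)%Z ->
  (forall i A, i != p -> i != q -> v i = Some A ->
     z p < z i < z q /\ (z q - z i) * Vp + (z i - z p) * Vq < (z q - z p) * A) ->
  dominant v.
Proof.
move=> vp vq no_tie above.
apply: (@dominant_of_hull [pred k | (k == p) || (k == q)]) => [s|i A s m].
  have : Vp + z p * s != Vq + z q * s.
    by apply: contraNneq no_tie => e; apply/dvdzP; exists s; lia.
  case: (ltgtP (Vp + z p * s) (Vq + z q * s)) => // lt_pq _; [exists p, Vp | exists q, Vq];
    split=> [|//|k B]; rewrite /= ?eqxx ?orbT //;
    by move=> /orP[]/eqP-> ne; rewrite ?vp ?vq => -[<-] //; rewrite eqxx in ne.
rewrite negb_or => /andP[ip iq] vi le_m; have [lt_i above_i] := above i A ip iq vi.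
apply: (lt_above_chord lt_i above_i); [apply: le_m vp | apply: le_m vq]; by rewrite /= eqxx ?orbT.
Qed.

Lemma dominant3 p j q Vp Vj Vq : v p = Some Vp -> v j = Some Vj -> v q = Some Vq ->
  z p < z j < z q -> ~~ (z j - z p %| Vp - Vj)%Z -> ~~ (z q - z j %| Vj - Vq)%Z ->
  (z q - z p) * Vj < (z q - z j) * Vp + (z j - z p) * Vq ->
  (forall i A, i != p -> i != j -> i != q -> v i = Some A ->
     z p < z i < z j /\ (z j - z i) * Vp + (z i - z p) * Vj < (z j - z p) * A \/
     z j < z i < z q /\ (z q - z i) * Vj + (z i - z j) * Vq < (z q - z j) * A) ->
  dominant v.
Proof.
move=> vp vj vq /andP[pj jq] no_tie_pj no_tie_jq below above.
apply: (@dominant_of_hull [pred k | [|| k == p, k == j | k == q]]) => [s|i A s m]; last first.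
  rewrite !negb_or => /and3P[ip ij iq] vi le_m.
  have [le_p le_j le_q] : [/\ m <= Vp + z p * s, m <= Vj + z j * s & m <= Vq + z q * s].
    by split; apply: le_m; rewrite ?vp ?vj ?vq //= eqxx ?orbT.
  by case: (above i A ip ij iq vi) => -[lt_i above_i]; exact: lt_above_chord above_i _ _.
set ep := Vp + z p * s; set ej := Vj + z j * s; set eq := Vq + z q * s.
have ne_pj : ep != ej by apply: contraNneq no_tie_pj => e; apply/dvdzP; exists s; lia.
have ne_jq : ej != eq by apply: contraNneq no_tie_jq => e; apply/dvdzP; exists s; lia.
have vertex k0 B0 : v k0 = Some B0 -> [|| k0 == p, k0 == j | k0 == q] ->
    [/\ k0 != p -> B0 + z k0 * s < ep, k0 != j -> B0 + z k0 * s < ej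
      & k0 != q -> B0 + z k0 * s < eq] ->
    exists i0 A0, [/\ [|| i0 == p, i0 == j | i0 == q], v i0 = Some A0 &
      forall k B, [|| k == p, k == j | k == q] -> k != i0 -> v k = Some B ->
        A0 + z i0 * s < B + z k * s].
  move=> vk0 Pk0 [lt_p lt_j lt_q]; exists k0, B0; split=> // k B /or3P[]/eqP-> ne.
  - by rewrite vp => -[<-]; apply: lt_p; rewrite eq_sym.
  - by rewrite vj => -[<-]; apply: lt_j; rewrite eq_sym.
  - by rewrite vq => -[<-]; apply: lt_q; rewrite eq_sym.
have [lt_jp|le_pj] := ltP ej ep.
  have [lt_jq|le_qj] := ltP ej eq.
    by apply: (vertex j Vj); rewrite ?eqxx ?orbT //; split; rewrite ?eqxx // => _; lia.
  by apply: (vertex q Vq); rewrite ?eqxx ?orbT //; split; rewrite ?eqxx // => _; lia.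
have [lt_jq|le_qj] := ltP ej eq.
  by apply: (vertex p Vp); rewrite ?eqxx ?orbT //; split; rewrite ?eqxx // => _; lia.
have convex : (z q - z p) * ej < (z q - z j) * ep + (z j - z p) * eq by lia.
have : (z q - z j) * ep <= (z q - z j) * ej by rewrite ler_wpM2l // subr_ge0 ltW.
have : (z j - z p) * eq <= (z j - z p) * ej by rewrite ler_wpM2l // subr_ge0 ltW.
lia.
Qed.

End NewtonPolygon.

Lemma lt_far_below (m k l X Y w N M : int) : 0 < m -> 0 <= k -> 0 <= l -> k + l <= N ->
  0 <= M -> - M <= X -> - M <= Y -> w < - (N * M) -> m * w < k * X + l * Y.
Proof.
move=> m_gt0 k_ge0 l_ge0 klN M_ge0 X_ge Y_ge w_lt.
have : 0 <= k * (X + M) by apply: mulr_ge0; lia.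
have : 0 <= l * (Y + M) by apply: mulr_ge0; lia.
have : 0 <= (N - k - l) * M by apply: mulr_ge0; lia.
have NM_ge0 : 0 <= N * M by apply: mulr_ge0; lia.
have : 0 <= (m - 1) * (- w) by apply: mulr_ge0; lia.
lia.
Qed.

Lemma ndvdz_lt (m r : int) : 0 < r < m -> ~~ (m %| r)%Z.
Proof. by move=> r_lt; rewrite dvdzE; apply/negP => /dvdn_leq; lia. Qed.

Lemma exists_nondvdz_pm1 (m n a b : int) : 2 <= m -> 3 <= n ->
  exists w, ~~ (m %| w - a)%Z && ~~ (n %| w - b)%Z.
Proof.
move=> m_ge2 n_ge3; have m1 : ~~ (m %| 1)%Z by apply: ndvdz_lt; lia.
have [n_dvd|n_ndvd] := boolP (n %| a + 1 - b)%Z; last first.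
  by exists (a + 1); rewrite n_ndvd addrAC subrr add0r m1.
exists (a - 1); rewrite addrAC subrr add0r rpredN m1 /=.
have n2 : ~~ (n %| 2)%Z by apply: ndvdz_lt; lia.
apply: contra n2 => n_dvd'; rewrite (_ : 2%Z = (a + 1 - b) - (a - 1 - b)); [exact: rpredB | lia].
Qed.

Lemma exists_nondvdz_pair (m n a b : int) : 2 <= m -> 2 <= n ->
  [|| 3 <= m, 3 <= n | (2 %| a - b)%Z] -> exists w, ~~ (m %| w - a)%Z && ~~ (n %| w - b)%Z.
Proof.
move=> m_ge2 n_ge2 cond; have [n_ge3|n_lt3] := lerP 3 n; first exact: exists_nondvdz_pm1.
have [m_ge3|m_lt3] := lerP 3 m.
  by have [w /andP[nw mw]] := exists_nondvdz_pm1 b a n_ge2 m_ge3; exists w; rewrite nw mw.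
move: cond; rewrite !leNgt m_lt3 n_lt3 /= => ab_even.
have [-> ->] : m = 2%Z /\ n = 2%Z by lia.
have two1 : ~~ (2 %| 1)%Z by [].
exists (a + 1); rewrite addrAC subrr add0r two1 /=.
apply: contra two1 => odd_ab; rewrite (_ : 1%Z = (a + 1 - b) - (a - b)); [exact: rpredB | lia].
Qed.

Lemma exists_lt_dvdz (P w0 B : int) : 0 < P -> exists2 w : int, w < B & (P %| w - w0)%Z.
Proof.
move=> P_gt0; exists (w0 - P * (`|w0 - B| + 1)); last first.
  by apply/dvdzP; exists (- (`|w0 - B| + 1)); ring.
have := ler_norm (w0 - B); have : `|w0 - B| + 1 <= P * (`|w0 - B| + 1).
  by rewrite ler_peMl //; lia.
lia.
Qed.

Lemma dvdz_sub_congr (m P w w0 a : int) : (m %| P)%Z -> (P %| w - w0)%Z ->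
  (m %| w - a)%Z = (m %| w0 - a)%Z.
Proof.
move=> mP /(dvdz_trans mP) mw.
by rewrite (_ : w - a = (w - w0) + (w0 - a)) ?(rpredDl _ mw) // addrA subrK.
Qed.

Lemma ord0_neq_max n : (0 < n)%N -> ord0 != ord_max :> 'I_n.+1.
Proof. by move=> n_gt0; apply/eqP => /(congr1 val) /=; lia. Qed.

Lemma ltn_inner_ord n (i : 'I_n.+1) : i != ord0 -> i != ord_max -> (0 < i < n)%N.
Proof. by move: (ltn_ord i); rewrite -!(inj_eq val_inj) /=; lia. Qed.

Lemma exists_val_bound d (v : 'I_d.+1 -> option int) :
  exists M, forall i A, v i = Some A -> - M <= A <= M.
Proof.
exists (\sum_(i < d.+1) `|odflt 0 (v i)|) => i A vi.
by rewrite -ler_norml (bigD1 i) //= vi lerDl sumr_ge0.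
Qed.

Definition set_val d (v : 'I_d.+1 -> option int) (j : 'I_d.+1) (o : option int) :
  'I_d.+1 -> option int := fun i => if i == j then o else v i.

Section LastCoefficient.
Variables (d : nat) (v : 'I_d.+1 -> option int) (M : int).
Hypotheses (d_ge2 : (2 <= d)%N) (v_bound : forall i A, v i = Some A -> - M <= A <= M).

Lemma bound_ge0 i A : v i = Some A -> 0 <= M.
Proof. by move/v_bound; lia. Qed.

Let d_gt0 : 0 < d%:Z.
Proof. by lia. Qed.

Let ord0_max : ord0 != ord_max :> 'I_d.+1.
Proof. exact: ord0_neq_max (ltnW d_ge2). Qed.

Lemma exists_dominant_set_first Vd : v ord_max = Some Vd ->
  exists w, dominant (set_val v ord0 (Some w)).
Proof.
move=> vd; have M_ge0 := bound_ge0 vd; have Vd_bd := v_bound vd.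
have [w w_lt dvd_w] := exists_lt_dvdz (Vd + 1) (- (2 * d%:Z * M)) d_gt0.
exists w; apply: (@dominant2 _ _ ord0 ord_max w Vd); rewrite /set_val ?eqxx ?subr0 //.
- by rewrite eq_sym (negPf ord0_max).
- by rewrite (dvdz_sub_congr _ (dvdzz _) dvd_w) addrAC subrr add0r ndvdz_lt //; lia.
move=> i A i0 id; rewrite (negPf i0) => vi; have := v_bound vi.
have := ltn_inner_ord i0 id; rewrite /=; split; first by lia.
by have := @lt_far_below (d%:Z - z i) d%:Z (z i) A (- Vd) w (2 * d%:Z) M; lia.
Qed.

Lemma exists_dominant_set_last V0 : v ord0 = Some V0 ->
  exists w, dominant (set_val v ord_max (Some w)).
Proof.
move=> v0; have M_ge0 := bound_ge0 v0; have V0_bd := v_bound v0.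
have [w w_lt dvd_w] := exists_lt_dvdz (V0 + 1) (- (2 * d%:Z * M)) d_gt0.
exists w; apply: (@dominant2 _ _ ord0 ord_max V0 w); rewrite /set_val ?eqxx ?subr0 //.
- by rewrite (negPf ord0_max).
- by rewrite -opprB rpredN (dvdz_sub_congr _ (dvdzz _) dvd_w) addrAC subrr add0r ndvdz_lt //; lia.
move=> i A i0 id; rewrite (negPf id) => vi; have := v_bound vi.
have := ltn_inner_ord i0 id; rewrite /=; split; first by lia.
by have := @lt_far_below (z i) d%:Z (d%:Z - z i) A (- V0) w (2 * d%:Z) M; lia.
Qed.

Lemma exists_dominant_set_inner (j : 'I_d.+1) V0 Vd : (1 < j < d.-1)%N ->
  v ord0 = Some V0 -> v ord_max = Some Vd ->
  [|| 3 <= z j, 3 <= d%:Z - z j | (2 %| V0 - Vd)%Z] ->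
  exists w, dominant (set_val v j (Some w)).
Proof.
move=> /andP[j_gt1 j_lt] v0 vd cond.
have M_ge0 := bound_ge0 v0; have V0_bd := v_bound v0; have Vd_bd := v_bound vd.
pose m : int := z j; pose n : int := d%:Z - z j.
have [||w0 /andP[w0_0 w0_d]] := @exists_nondvdz_pair m n V0 Vd _ _ cond; try lia.
have mn_gt0 : 0 < m * n by apply: mulr_gt0; lia.
have [w w_lt dvd_w] := exists_lt_dvdz w0 (- (2 * d%:Z * M)) mn_gt0.
have j0 : ord0 != j by rewrite -(inj_eq val_inj) /= eq_sym -lt0n; lia.
have jd : ord_max != j by rewrite -(inj_eq val_inj) /= gtn_eqF //; lia.
exists w; apply: (@dominant3 _ _ ord0 j ord_max V0 w Vd);
  rewrite /set_val ?eqxx ?(negPf j0) ?(negPf jd) /= ?subr0 //.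
- by apply/andP; split; lia.
- by rewrite -opprB rpredN (dvdz_sub_congr _ (dvdz_mulr _ (dvdzz _)) dvd_w).
- by rewrite (dvdz_sub_congr _ (dvdz_mull _ (dvdzz _)) dvd_w).
- by have := @lt_far_below d%:Z (d%:Z - z j) (z j) V0 Vd w (2 * d%:Z) M; lia.
move=> i A i0 ij id; rewrite (negPf ij) => vi; have := v_bound vi.
have := ltn_inner_ord i0 id; have [lt_ij|lt_ji] := ltnP i j => lt_i A_bd; [left|right].
  split; first by lia.
  by have := @lt_far_below (z i) (z j) (z j - z i) A (- V0) w (2 * d%:Z) M; lia.
split; first by have : (i : nat) != j by []; lia.
by have := @lt_far_below (d%:Z - z i) (d%:Z - z j) (z i - z j) A (- Vd) w (2 * d%:Z) M; lia.
Qed.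

End LastCoefficient.

Lemma dominant_set_none d (v : 'I_d.+1 -> option int) (j : 'I_d.+1) V0 V4 :
  d = 4%N -> (j : nat) = 2%N -> v ord0 = Some V0 -> v ord_max = Some V4 ->
  ~~ (2 %| V0 - V4)%Z -> (forall i : 'I_d.+1, odd i -> v i = None) ->
  dominant (set_val v j None).
Proof.
move=> d4 j2 v0 v4 odd_V04 odd_none.
have s0 : set_val v j None ord0 = Some V0.
  by rewrite /set_val -(inj_eq val_inj) /= j2.
have s4 : set_val v j None ord_max = Some V4.
  by rewrite /set_val -(inj_eq val_inj) /= j2 ifN_eq // d4.
apply: (dominant2 s0 s4).
  by apply: (contra _ odd_V04) => dvd4; apply: (dvdz_trans _ dvd4); rewrite /= d4.
move=> i A i0 i4; rewrite /set_val; case: ifP => [//|/negbT ij].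
by rewrite odd_none //; move: (ltn_inner_ord i0 i4) ij; rewrite -(inj_eq val_inj) /= j2; lia.
Qed.

Lemma exists_last_val d (v : 'I_d.+1 -> option int) (j : 'I_d.+1) : (2 <= d)%N ->
  (j : nat) != 1%N -> (j : nat) != d.-1 ->
  (forall i, i != j -> ((i : nat) == 0%N) || ((i : nat) == d) -> v i != None) ->
  (d = 4%N -> (j : nat) = 2%N -> forall i : 'I_d.+1, odd i -> v i = None) ->
  exists o, (o = None -> (0 < j < d)%N) /\ dominant (set_val v j o).
Proof.
move=> d_ge2 j_neq1 j_neq_pred ends mid_only; have [M v_bound] := exists_val_bound v.
have end_val k : k != j -> ((k : nat) == 0%N) || ((k : nat) == d) -> exists A, v k = Some A.
  by move=> kj /(ends k kj); case: (v k) => [A|] // _; exists A.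
have [j_eq0|j0] := eqVneq j ord0.
  have [Vd /(exists_dominant_set_first d_ge2 v_bound)[w dom]] : exists A, v ord_max = Some A.
    by apply: end_val; rewrite /= ?eqxx ?orbT // j_eq0 eq_sym ord0_neq_max //; lia.
  by exists (Some w); rewrite j_eq0.
have [j_eqd|jd] := eqVneq j ord_max.
  have [V0 /(exists_dominant_set_last d_ge2 v_bound)[w dom]] : exists A, v ord0 = Some A.
    by apply: end_val; rewrite // j_eqd ord0_neq_max //; lia.
  by exists (Some w); rewrite j_eqd.
have [V0 v0] : exists A, v ord0 = Some A by apply: end_val; rewrite // eq_sym.
have [Vd vd] : exists A, v ord_max = Some A by apply: end_val; rewrite /= ?eqxx ?orbT // eq_sym.
have j_inner := ltn_inner_ord j0 jd.
have [cond|] := boolP [|| 3 <= z j, 3 <= d%:Z - z j | (2 %| V0 - Vd)%Z].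
  have j_mid : (1 < j < d.-1)%N by lia.
  have [w dom] := exists_dominant_set_inner d_ge2 v_bound j_mid v0 vd cond.
  by exists (Some w).
case/norP=> /negP j_lt3 /norP[/negP dj_lt3 odd_V0d].
have [d4 j2] : d = 4%N /\ (j : nat) = 2%N by lia.
by exists None; split=> [_ //|]; apply: dominant_set_none v0 vd odd_V0d (mid_only d4 j2).
Qed.

Section GameInvariant.
Variables (A : Type) (d : nat) (valid : 'I_d.+1 -> A -> Prop)
          (goal : ('I_d.+1 -> A) -> Prop) (dflt : A).
Variable inv : nat -> ('I_d.+1 -> option A) -> Prop.

Hypothesis nora_move : forall n s, odd n -> (1 < n)%N -> inv n s ->
  exists i c, [/\ s i = None, valid i c & inv n.-1 (upd s i c)].
Hypothesis wanda_move : forall n s i c, ~~ odd n -> inv n s -> s i = None -> valid i c ->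
  inv n.-1 (upd s i c).
Hypothesis last_move : forall s, inv 1 s ->
  exists i c, [/\ s i = None, valid i c & goal (fun k => odflt dflt (upd s i c k))].

Lemma nora_wins_from_inv n s : (0 < n)%N -> inv n s -> nora_wins_from valid goal dflt n s.
Proof.
elim: n s => [//|[_ s _ /last_move //|n IHn] s _ inv_s] /=.
case: ifP => odd_n.
  have [i [c [si ci inv_upd]]] := nora_move (odd_n : odd n.+2) isT inv_s.
  by exists i, c; split=> //; apply: IHn.
by move=> i c si ci; apply: IHn (wanda_move _ inv_s si ci) => //=; rewrite odd_n.
Qed.

End GameInvariant.

Definition lmono (R : nzRingType) (w : int) : int -> R := fun n => if n == w then 1 else 0.

Lemma lmono_valid (F : nzRingType) d (i : 'I_d.+1) w : coef_valid i (lmono F w).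
Proof.
split; first by exists w => n /lt_eqF; rewrite /lmono => ->.
by exists w; rewrite /lmono eqxx oner_neq0.
Qed.

Lemma lzero_valid (F : nzRingType) d (i : 'I_d.+1) :
  (0 < i < d)%N -> coef_valid i (lzero F).
Proof. by split=> [|/orP[]/eqP]; [exists 0 | lia..]. Qed.

Section CoefficientGame.
Variables (F K : fieldType) (iota : {rmorphism F -> K}) (d : nat) (D2 : (int -> K) -> Prop).
Hypotheses (D2_sub : is_lsubring D2) (d_ge2 : (2 <= d)%N) (d_neq3 : d != 3%N).

Local Notation state := ('I_d.+1 -> option (int -> F)).

Definition no_root_in_D2 (a : 'I_d.+1 -> int -> F) : Prop :=
  forall x, D2 x -> ~ (forall n : int, leval (fun i m => iota (a i m)) x n = 0).

Definition legal (s : state) : Prop := forall i c, s i = Some c -> coef_valid i c.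

Definition open_set (s : state) : {set 'I_d.+1} := [set i | ~~ s i].

Definition bad : {set 'I_d.+1} := [set i : 'I_d.+1 | ((i : nat) == 1%N) || ((i : nat) == d.-1)].

Definition zeroed (s : state) (i : 'I_d.+1) : Prop := s i = None \/ s i = Some (lzero F).

Definition mid : 'I_d.+1 := inord 2.

(* For d = 4, Nora's last move on the middle coefficient may have to be 0,
   which only works if the coefficients of x and x^3 vanish. *)
Definition threat (s : state) : Prop :=
  [/\ d = 4%N, s mid = None & ~ (forall i, i \in bad -> zeroed s i)].

Definition badness (s : state) : nat :=
  #|bad :&: open_set s| + (if excluded_middle_informative (threat s) then 1 else 0).

(* No move increases the badness and each of Nora's moves decreases it while
   positive, so this bound lets her bring it to 0 before her last move. *)
Definition safe (n : nat) (s : state) : Prop :=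
  [/\ legal s, #|open_set s| = n & (2 * badness s < n)%N].

Lemma open_set_upd s i c : s i = None -> open_set (upd s i c) = open_set s :\ i.
Proof. by move=> si; apply/setP => k; rewrite !inE /upd; case: eqVneq => [->|]; rewrite ?si. Qed.

Lemma card_open_set_upd s i c : s i = None -> #|open_set (upd s i c)| = #|open_set s|.-1.
Proof. by move=> si; rewrite open_set_upd // (cardsD1 i (open_set s)) inE si. Qed.

Lemma card_bad_open_upd s i c : s i = None ->
  #|bad :&: open_set (upd s i c)| = (#|bad :&: open_set s| - (i \in bad))%N.
Proof.
move=> si; rewrite open_set_upd // setIDA (cardsD1 i (bad :&: _)) !inE si andbT.
by rewrite addKn.
Qed.

Lemma bad_open_gt0 s i : s i = None -> i \in bad -> (0 < #|bad :&: open_set s|)%N.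
Proof. by move=> si i_bad; apply/card_gt0P; exists i; rewrite in_setI i_bad inE si. Qed.

Lemma threat_upd s i c : s i = None -> i \notin bad \/ c = lzero F ->
  threat (upd s i c) -> threat s.
Proof.
move=> si harmless [d4 upd_mid not_zeroed]; split=> //.
  by move: upd_mid; rewrite /upd; case: eqP.
move=> zeroed_s; apply: not_zeroed => k k_bad; rewrite /zeroed /upd.
case: eqP => [k_eq|_]; last exact: zeroed_s.
by case: harmless => [|->]; [rewrite -k_eq k_bad | right].
Qed.

Lemma badness_upd s i c : s i = None -> (badness (upd s i c) <= badness s)%N.
Proof.
move=> si; rewrite /badness card_bad_open_upd //.
case: excluded_middle_informative => [t_upd|] /=; last first.
  by case: excluded_middle_informative => /=; lia.
have [i_bad|i_good] := boolP (i \in bad).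
  by have := bad_open_gt0 si i_bad; case: excluded_middle_informative => /=; lia.
case: excluded_middle_informative => [_|[]] /=; first by lia.
exact: threat_upd si (or_introl i_good) t_upd.
Qed.

Lemma badness_decr s : (0 < badness s)%N ->
  exists i c, [/\ s i = None, coef_valid i c & (badness (upd s i c) < badness s)%N].
Proof.
move=> pos; have [bad_closed|[i]] := set_0Vmem (bad :&: open_set s); last first.
  rewrite in_setI => /andP[i_bad]; rewrite inE; case si: (s i) => //= _.
  exists i, (lzero F); split=> //.
    by apply: lzero_valid; move: i_bad (ltn_ord i); rewrite inE; lia.
  have := bad_open_gt0 si i_bad; rewrite /badness card_bad_open_upd // i_bad.
  case: excluded_middle_informative => [/(threat_upd si (or_intror erefl))|] /=;
    case: excluded_middle_informative => //= *; lia.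
move: pos; rewrite /badness bad_closed cards0.
case: excluded_middle_informative => [[d4 s_mid _] _|] //=.
have mid2 : (mid : nat) = 2%N by rewrite inordK //; lia.
exists mid, (lzero F); split=> //; first by apply: lzero_valid; lia.
rewrite card_bad_open_upd // bad_closed cards0.
by case: excluded_middle_informative => [[_]|] //=; rewrite /upd eqxx.
Qed.

Lemma odd_zeroed s j : (forall i, s i = None <-> i = j) -> ~ threat s ->
  d = 4%N -> (j : nat) = 2%N -> forall i : 'I_d.+1, odd i -> s i = Some (lzero F).
Proof.
move=> open_j no_threat d4 j2 i odd_i.
have j_mid : j = mid by apply: val_inj; rewrite /= inordK ?j2 //; lia.
have i_bad : i \in bad.
  by move: odd_i (ltn_ord i); rewrite inE; case: (i : nat) => [|[|[|[|[|]]]]]; lia.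
have [all_zeroed|not_zeroed] := excluded_middle_informative (forall k, k \in bad -> zeroed s k).
  by case: (all_zeroed i i_bad) => // /open_j i_eq; move: odd_i; rewrite i_eq j2.
by case: no_threat; split=> //; apply/(open_j mid)/esym.
Qed.

Lemma final_move s j : legal s -> (forall i, s i = None <-> i = j) -> j \notin bad ->
  ~ threat s -> exists c, coef_valid j c /\ no_root_in_D2 (fun i => odflt (lzero F) (upd s j c i)).
Proof.
move=> legal_s open_j j_good no_threat.
pose b i m := iota (odflt (lzero F) (s i) m).
have [v bv] : exists v : 'I_d.+1 -> option int, forall i, has_val (b i) (v i).
  apply: (@fin_all_exists _ (fun _ => option int) (fun i o => has_val (b i) o)) => i.
  apply: exists_val; rewrite /b; case si: (s i) => [c|] /=; last by exists 0 => *; rewrite rmorph0.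
  by have [[N cN] _] := legal_s i c si; exists N => n /cN ->; rewrite rmorph0.
have fixed i : i != j -> exists c, s i = Some c.
  move=> ij; case si: (s i) => [c|]; first by exists c.
  by move/open_j: si => /eqP; rewrite (negPf ij).
have ends i : i != j -> ((i : nat) == 0%N) || ((i : nat) == d) -> v i != None.
  move=> ij end_i; have [c si] := fixed i ij; have [_ /(_ end_i) [n cn]] := legal_s i c si.
  have := bv i; case: (v i) => // b0; move/eqP: (b0 n).
  by rewrite /b si /= fmorph_eq0 (negPf cn).
have mid_none : d = 4%N -> (j : nat) = 2%N -> forall i : 'I_d.+1, odd i -> v i = None.
  move=> d4 j2 i odd_i; apply: has_val_eq0 (bv i) => k.
  by rewrite /b (odd_zeroed open_j no_threat d4 j2 odd_i) rmorph0.
have j_neq1 : (j : nat) != 1%N by apply: contra j_good; rewrite inE => ->.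
have j_neq_pred : (j : nat) != d.-1 by apply: contra j_good; rewrite inE orbC => ->.
have [o [o_none dom]] := exists_last_val d_ge2 j_neq1 j_neq_pred ends mid_none.
exists (if o is Some w then lmono F w else lzero F); split.
  by case: o o_none {dom} => [w _|/(_ erefl)]; [exact: lmono_valid | exact: lzero_valid].
move=> x x_D2; apply: (leval_nonzero (v := set_val v j o)) dom _.
- move=> i; rewrite /set_val /upd; case: eqP => [_|_]; last exact: bv.
  case: o {o_none} => [w|] /=; last by move=> k; rewrite rmorph0.
  split=> [|k /lt_eqF]; rewrite /lmono ?eqxx ?rmorph1 ?oner_neq0 // => ->.
  by rewrite rmorph0.
- rewrite /set_val; have [j0|j0] := eqVneq ord0 j; last by apply: ends; rewrite // eq_sym.
  by case: o o_none => // /(_ erefl); rewrite -j0.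
- by case: D2_sub => /(_ x x_D2).
Qed.

Lemma legal_upd s i c : legal s -> coef_valid i c -> legal (upd s i c).
Proof. by move=> legal_s ci k c'; rewrite /upd; case: eqP => [-> [<-] //|_]; apply: legal_s. Qed.

Lemma safe_upd n s i c : safe n s -> s i = None -> coef_valid i c ->
  (2 * badness (upd s i c) < n.-1)%N -> safe n.-1 (upd s i c).
Proof.
case=> legal_s card_s _ si ci.
by split; [exact: legal_upd | rewrite card_open_set_upd ?card_s |].
Qed.

Lemma safe_nora n s : odd n -> (1 < n)%N -> safe n s ->
  exists i c, [/\ s i = None, coef_valid i c & safe n.-1 (upd s i c)].
Proof.
move=> odd_n n_gt1 safe_s; have [_ card_s bad_s] := safe_s.
suff [i [c [si ci bad_upd]]] : exists i c,
    [/\ s i = None, coef_valid i c & (2 * badness (upd s i c) < n.-1)%N].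
  by exists i, c; split=> //; apply: safe_upd.
have [zero|pos] := posnP (badness s); last first.
  by have [i [c [si ci lt_bad]]] := badness_decr pos; exists i, c; split=> //; lia.
have : (0 < #|open_set s|)%N by rewrite card_s; lia.
case/card_gt0P => i; rewrite inE; case si: (s i) => //= _.
by exists i, (lmono F 0); split; [|exact: lmono_valid|have := badness_upd (lmono F 0) si; lia].
Qed.

Lemma safe_wanda n s i c : ~~ odd n -> safe n s -> s i = None -> coef_valid i c ->
  safe n.-1 (upd s i c).
Proof.
move=> even_n safe_s si ci; apply: safe_upd => //; case: safe_s => _ _.
by have := badness_upd c si; lia.
Qed.

Lemma safe_last s : safe 1 s -> exists i c,
  [/\ s i = None, coef_valid i c & no_root_in_D2 (fun k => odflt (lzero F) (upd s i c k))].
Proof.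
case=> legal_s /eqP/cards1P[j open_s]; rewrite /badness ltnS leqn0 muln_eq0 /= addn_eq0.
case/andP=> /eqP bad_closed no_threat.
have open_j i : s i = None <-> i = j.
  split=> [si|->]; first by apply/set1P; rewrite -open_s inE si.
  by move: (set11 j); rewrite -open_s inE; case: (s j).
have j_good : j \notin bad.
  by apply/negP => /(bad_open_gt0 ((open_j j).2 erefl)); rewrite bad_closed.
have : ~ threat s by move: no_threat; case: excluded_middle_informative.
case/(final_move legal_s open_j j_good) => c [cj goal_c].
by exists j, c; split=> //; apply/open_j.
Qed.

Lemma safe_start : safe d.+1 (fun _ => None).
Proof.
have open_all : open_set (fun _ => None) = setT by apply/setP => i; rewrite !inE.
split=> //; first by rewrite open_all cardsT card_ord.
rewrite /badness open_all setIT; case: excluded_middle_informative => [thr|_] /=.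
  by case: thr => _ _ []; left.
have : bad \subset [set inord 1; inord d.-1].
  by apply/subsetP => i; rewrite !inE => /orP[]/eqP i_eq; apply/orP; [left|right];
    apply/eqP/val_inj; rewrite /= inordK //; lia.
move/subset_leq_card; rewrite cards2.
have [d2|d_ne2] := eqVneq d 2%N; last by case: (_ != _) => /=; lia.
by rewrite (_ : inord 1 == inord d.-1) /=; [lia | rewrite d2].
Qed.

End CoefficientGame.

(* K with iota : F -> K is an algebraic closure of F; only valuations matter in
   the argument. *)
Theorem corollary5 (F : fieldType) (K : closedFieldType) (iota : {rmorphism F -> K})
    (iota_alg : forall x : K, exists2 p : {poly F}, p != 0 & root (map_poly iota p) x)
    (d : nat) (hd : (0 < d)%N) (hd1 : d != 1%N) (hd3 : d != 3%N)
    (D2 : (int -> K) -> Prop) (hD2 : is_lsubring D2) :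
  nora_wins_last (@coef_valid F d)
    (fun a : 'I_d.+1 -> int -> F =>
       forall x, D2 x -> ~ (forall n : int, leval (fun i m => iota (a i m)) x n = 0))
    (lzero F).
Proof.
have d_ge2 : (2 <= d)%N by lia.
rewrite /nora_wins_last; apply: (@nora_wins_from_inv _ _ _ _ _ (@safe F d)) => //.
- exact: safe_nora.
- exact: safe_wanda.
- exact: (safe_last iota hD2 d_ge2).
- exact: safe_start.
Qed.
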